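(* Let $n\ge2$, $K\in\mathcal S_n$, and let $u\in S^{n-1}$ be such that $h_K$ is twice continuously differentiable in a neighborhood of $u$. Let $x=\nabla h_K(u)\in\partial K$ and $y=x-u\in\partial K^c$, and let $0\le r_1\le\dots\le r_{n-1}\le1$ and $0\le s_1\le\dots\le s_{n-1}\le1$ be the principal radii of curvature of $K$ at $x$ (in normal direction $u$) and of $K^c$ at $y$ (in normal direction $-u$), respectively. Then \[ r_i+s_{n-i}=1,\qquad i=1,\dots,n-1. \]
   Context: $B(x,r)$ is the closed Euclidean ball. For $A\subseteq\mathbb R^n$, $A^c=\bigcap_{x\in A}B(x,1)$. $\mathcal S_n$ is the class of all sets of the form $\bigcap_{x\in A}B(x,1)$, $A\subseteq\mathbb R^n$. $h_K(v)=\sup_{z\in K}\langle z,v\rangle$ is the support function. For a convex body $T$ whose support function is $C^2$ near a unit vector $w$, the principal radii of curvature of $T$ at $\nabla h_T(w)$ (with respect to the normal $w$) are the eigenvalues of the Hessian $\nabla^2h_T(w)$ restricted to $w^\perp$ (the eigenvalue in direction $w$ being $0$). *)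

From HB Require Import structures.
From mathcomp Require Import all_boot all_order all_algebra.
From mathcomp Require Import all_classical all_reals all_analysis.
Set Implicit Arguments. Unset Strict Implicit. Unset Printing Implicit Defensive.
Import Order.TTheory GRing.Theory Num.Theory.
Import numFieldNormedType.Exports.
Local Open Scope classical_set_scope.
Local Open Scope ring_scope.

Section Defs.
Variables (R : realType) (n : nat).
Notation V := 'rV[R]_n.

Definition dotp (x y : V) : R := \sum_(i < n) x 0 i * y 0 i.
Definition enorm (x : V) : R := Num.sqrt (dotp x x).

(* A^c = intersection of the closed Euclidean unit balls centred at points of A *)
Definition cpolar (A : set V) : set V := [set z | forall x, A x -> enorm (z - x) <= 1].

Definition in_Sn (K : set V) : Prop := exists A : set V, K = cpolar A.

(* support function, extended-real valued (+oo / -oo for unbounded / empty sets) *)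
Definition supp_fun (K : set V) (v : V) : \bar R :=
  ereal_sup [set (dotp z v)%:E | z in K].

Definition ebase (i : 'I_n) : V := delta_mx 0 i.

Definition partial (i : 'I_n) (f : V -> R) : V -> R := fun x => 'D_(ebase i) f x.

Definition grad (f : V -> R) (x : V) : V := \row_i partial i f x.
Definition hess (f : V -> R) (x : V) : 'M[R]_n :=
  \matrix_(i, j) partial j (partial i f) x.

Definition C2_near (f : V -> R) (w : V) : Prop :=
  \forall x \near w,
    [/\ f @ x --> f x,
        (forall i, derivable f x (ebase i)),
        (forall i, partial i f @ x --> partial i f x),
        (forall i j, derivable (partial i f) x (ebase j)) &
        (forall i j, partial j (partial i f) @ x --> partial j (partial i f) x)].

Definition supp_rep (T : set V) (w : V) (f : V -> R) : Prop :=
  \forall v \near w, supp_fun T v = (f v)%:E.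

Definition C2_support (T : set V) (w : V) : Prop :=
  exists f, supp_rep T w f /\ C2_near f w.

(* r : the eigenvalues (with multiplicity, nondecreasing) of the Hessian of h_T
   at the unit vector w, restricted to w^perp: B is an orthonormal basis of
   w^perp (as columns), B^T H B the matrix of the restriction. *)
Definition principal_radii (T : set V) (w : V) (r : 'I_n.-1 -> R) : Prop :=
  exists f, [/\ supp_rep T w f, C2_near f w,
    (forall i j : 'I_n.-1, (i <= j)%N -> r i <= r j) &
    exists B : 'M[R]_(n, n.-1),
      [/\ B^T *m B = 1%:M, w *m B = 0 &
          char_poly (B^T *m hess f w *m B) = \prod_(i < n.-1) ('X - (r i)%:P)]].

End Defs.

From HB Require Import structures.
From mathcomp Require Import all_boot all_order all_algebra.
From mathcomp Require Import all_classical all_reals all_analysis.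
From mathcomp Require Import ring lra.
Import Order.TTheory GRing.Theory Num.Theory.
Import numFieldNormedType.Exports.
Local Open Scope classical_set_scope.
Local Open Scope ring_scope.
Set Implicit Arguments. Unset Strict Implicit. Unset Printing Implicit Defensive.

(* For K = A^c and a unit vector w, let x maximise <., w> on K.  Then K lies in
   the unit ball around x - w: if some y in K were farther away, a point of the
   "spindle" between x and y, which stays in K, would beat x in direction w.
   Hence x - w lies in K^c, and h_{K^c}(v) = |v| - h_K(-v) for v <> 0.
   Differentiating twice at v = -u gives
   Hess h_{K^c}(-u) = I - u^T u - Hess h_K(u), so on u^perp the two Hessians
   add up to the identity and their ordered eigenvalues pair off as
   r_i + s_{n-i} = 1. *)

Section Dotp.
Variables (R : realType) (n : nat).
Notation V := 'rV[R]_n.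
Implicit Types x y z : V.

Lemma dotpC x y : dotp x y = dotp y x.
Proof. by apply: eq_bigr => i _; rewrite mulrC. Qed.

Lemma dotpDl x y z : dotp (x + y) z = dotp x z + dotp y z.
Proof. by rewrite /dotp -big_split; apply: eq_bigr => i _; rewrite !mxE mulrDl. Qed.

Lemma dotpZl (a : R) x y : dotp (a *: x) y = a * dotp x y.
Proof. by rewrite /dotp mulr_sumr; apply: eq_bigr => i _; rewrite !mxE mulrA. Qed.

Lemma dotpNl x y : dotp (- x) y = - dotp x y.
Proof. by rewrite -scaleN1r dotpZl mulN1r. Qed.

Lemma dotpBl x y z : dotp (x - y) z = dotp x z - dotp y z.
Proof. by rewrite dotpDl dotpNl. Qed.

Lemma dotpDr x y z : dotp x (y + z) = dotp x y + dotp x z.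
Proof. by rewrite dotpC dotpDl !(dotpC x). Qed.

Lemma dotpZr (a : R) x y : dotp x (a *: y) = a * dotp x y.
Proof. by rewrite dotpC dotpZl dotpC. Qed.

Lemma dotpNr x y : dotp x (- y) = - dotp x y.
Proof. by rewrite dotpC dotpNl dotpC. Qed.

Lemma dotpBr x y z : dotp x (y - z) = dotp x y - dotp x z.
Proof. by rewrite dotpDr dotpNr. Qed.

Lemma dotp_sqrB x y : dotp (x - y) (x - y) = dotp x x - 2 * dotp x y + dotp y y.
Proof. by rewrite !(dotpBl, dotpBr) (dotpC y x); ring. Qed.

Lemma dotp0r x : dotp x 0 = 0.
Proof. by rewrite -(scale0r 0) dotpZr mul0r. Qed.

Lemma dotpxx_ge0 x : 0 <= dotp x x.
Proof. by apply: sumr_ge0 => i _; rewrite -expr2 sqr_ge0. Qed.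

Lemma dotp_ebase x (i : 'I_n) : dotp x (ebase R i) = x 0 i.
Proof.
rewrite /dotp (bigD1 i) //= big1 ?addr0; first by rewrite mxE !eqxx mulr1.
by move=> j ji; rewrite mxE (negbTE ji) andbF mulr0.
Qed.

Lemma dotpxx_eq0 x : (dotp x x == 0) = (x == 0).
Proof.
apply/idP/eqP => [/eqP/psumr_eq0P xx0|->]; last by rewrite dotp0r.
apply/rowP => i; rewrite mxE; apply/eqP; rewrite -sqrf_eq0 expr2 xx0 //.
by move=> j _; rewrite -expr2 sqr_ge0.
Qed.

Lemma enorm_gt0 x : (0 < enorm x) = (x != 0).
Proof. by rewrite sqrtr_gt0 lt_def dotpxx_eq0 dotpxx_ge0 andbT. Qed.

Lemma enorm_ge0 x : 0 <= enorm x.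
Proof. exact: sqrtr_ge0. Qed.

Lemma sqr_enorm x : enorm x ^+ 2 = dotp x x.
Proof. by rewrite sqr_sqrtr // dotpxx_ge0. Qed.

Lemma enorm_le1 x : (enorm x <= 1) = (dotp x x <= 1).
Proof. by rewrite -{1}sqrtr1 ler_sqrt. Qed.

Lemma enorm0 : enorm (0 : V) = 0.
Proof. by rewrite /enorm dotp0r sqrtr0. Qed.

Lemma enormN x : enorm (- x) = enorm x.
Proof. by rewrite /enorm dotpNl dotpNr opprK. Qed.

(* Expand [0 <= |x - y / |y| |^2]. *)
Lemma dotp_le_enorm x y : dotp x x <= 1 -> dotp x y <= enorm y.
Proof.
move=> x1; have [->|y0] := eqVneq y 0; first by rewrite dotp0r enorm0.
have N0 : 0 < enorm y by rewrite enorm_gt0.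
have := dotpxx_ge0 (x - (enorm y)^-1 *: y).
rewrite dotp_sqrB !(dotpZl, dotpZr) -(sqr_enorm y).
set N := enorm y in N0 *; set p := dotp x y => h.
have e : N^-1 * (N^-1 * N ^+ 2) = 1.
  by rewrite mulrA -expr2 -exprMn mulVf ?gt_eqF ?expr1n.
rewrite e in h; have t1 : N^-1 * p <= 1 by lra.
by rewrite -(mulVKf (lt0r_neq0 N0) p) ler_piMr ?(ltW N0).
Qed.

Lemma mx_norm_le_enorm x : `|x| <= enorm x.
Proof.
rewrite [leLHS]/Num.norm /= mx_normrE; apply: bigmax_le => [|[i j] _ /=].
  exact: enorm_ge0.
rewrite (ord1 i) -ler_sqr ?nnegrE ?enorm_ge0 // real_normK ?num_real //.
rewrite sqr_enorm /dotp (bigD1 j) //= expr2 lerDl.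
by apply: sumr_ge0 => k _; rewrite -expr2 sqr_ge0.
Qed.

Lemma mulmx_tr_dotp x : x *m x^T = (dotp x x)%:M.
Proof.
by apply/matrixP => i j; rewrite !ord1 !mxE; apply: eq_bigr => k _; rewrite mxE.
Qed.

End Dotp.

Section Cpolar.
Variables (R : realType) (n : nat).
Notation V := 'rV[R]_n.
Implicit Types (A : set V) (x y z w v : V).

Lemma dotp_continuous w : continuous (fun y : V => dotp y w).
Proof.
move=> y; apply: differentiable_continuous.
rewrite (_ : (fun y : V => dotp y w) = \sum_(i < n) (fun y : V => y 0 i * w 0 i)).
  apply: differentiable_sum => i.
  by apply: differentiableM; [exact: differentiable_coord | exact: differentiable_cst].
by rewrite fct_sumE.
Qed.

Lemma dotpxx_continuous : continuous (fun y : V => dotp y y).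
Proof.
move=> y; apply: differentiable_continuous.
rewrite (_ : (fun y : V => dotp y y) = \sum_(i < n) (fun y : V => y 0 i * y 0 i)).
  by apply: differentiable_sum => i; apply: differentiableM; exact: differentiable_coord.
by rewrite fct_sumE.
Qed.

Lemma enorm_continuous : continuous (@enorm R n).
Proof.
move=> y; apply: (@continuous_comp _ _ _ (fun z : V => dotp z z) Num.sqrt).
  exact: dotpxx_continuous.
exact: sqrt_continuous.
Qed.

Lemma cpolar_closed A : closed (cpolar A).
Proof.
rewrite (_ : cpolar A =
    \bigcap_(a in A) ((fun z => enorm (z - a)) @^-1` [set r | r <= 1])).
  apply: closed_bigI => a _; apply: preimage_closed; last exact: closed_le.
  move=> z _; apply: (@continuous_comp _ _ _ (fun z : V => z - a) (@enorm R n)).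
    by apply: (@cvgB _ _ _ (nbhs z) _); [exact: cvg_id | exact: cvg_cst].
  exact: enorm_continuous.
by apply/seteqP; split => z /= Kz a Aa; exact: Kz.
Qed.

Lemma cpolar_bounded A a : A a -> bounded_set (cpolar A).
Proof.
move=> Aa; exists (`|a| + 1); split; first exact: num_real.
move=> M /ltW leM z Kz; apply: le_trans leM.
rewrite -(subrK a z) (le_trans (ler_normD _ _)) // addrC lerD2l.
by apply: le_trans (mx_norm_le_enorm _) _; exact: Kz.
Qed.

Lemma cpolar_argmax A w : A !=set0 -> cpolar A !=set0 ->
  exists2 x, cpolar A x & forall y, cpolar A y -> dotp y w <= dotp x w.
Proof.
move=> [a Aa] K0.
have cK : compact (cpolar A).
  by apply: bounded_closed_compact; [exact: cpolar_bounded Aa | exact: cpolar_closed].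
have [|x Kx xmax] := @EVT_max_rV R n (fun y => dotp y w) (cpolar A) K0 cK.
  by apply: continuous_subspaceT => y; exact: dotp_continuous.
by exists x => [|y Ky]; [rewrite -inE | apply: xmax; rewrite inE].
Qed.

Lemma dotp_convex_comb x y (l : R) :
  dotp ((1 - l) *: x + l *: y) ((1 - l) *: x + l *: y) =
  (1 - l) * dotp x x + l * dotp y y - l * (1 - l) * dotp (y - x) (y - x).
Proof.
by rewrite !(dotpDl, dotpDr, dotpNl, dotpNr, dotpZl, dotpZr) (dotpC y x); ring.
Qed.

(* The convex combination [m] of [x] and [y] has [|m|^2 <= 1 - 2 mu - mu^2],
   which leaves room for the shift by [mu w]. *)
Lemma unit_ball_spindle x y w (l mu : R) :
  dotp w w = 1 -> dotp x x <= 1 -> dotp y y <= 1 -> 0 <= l <= 1 -> 0 <= mu ->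
  2 * mu + mu ^+ 2 <= l * (1 - l) * dotp (y - x) (y - x) ->
  dotp ((1 - l) *: x + l *: y + mu *: w) ((1 - l) *: x + l *: y + mu *: w) <= 1.
Proof.
move=> ww xx yy /andP[l0 l1] mu0 hmu.
set m := (1 - l) *: x + l *: y.
have mm : dotp m m <= 1 - 2 * mu - mu ^+ 2.
  rewrite dotp_convex_comb.
  have : (1 - l) * dotp x x <= 1 - l by rewrite ler_piMr // subr_ge0.
  have : l * dotp y y <= l by rewrite ler_piMr.
  lra.
have mw : 2 * dotp m w <= dotp m m + 1.
  by have := dotpxx_ge0 (m - w); rewrite dotp_sqrB ww; lra.
clearbody m; rewrite !(dotpDl, dotpDr, dotpZl, dotpZr) ww (dotpC w m).
have := ler_wpM2l mu0 mw; have : 0 <= mu ^+ 3 by rewrite exprn_ge0.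
have := ler_wpM2l mu0 mm; nra.
Qed.

Lemma cpolar_spindle A x y w (l mu : R) :
  cpolar A x -> cpolar A y -> dotp w w = 1 -> 0 <= l <= 1 -> 0 <= mu ->
  2 * mu + mu ^+ 2 <= l * (1 - l) * dotp (y - x) (y - x) ->
  cpolar A (x + l *: (y - x) + mu *: w).
Proof.
move=> Kx Ky ww l01 mu0 hmu a Aa.
have -> : x + l *: (y - x) + mu *: w - a = (1 - l) *: (x - a) + l *: (y - a) + mu *: w.
  by apply/rowP => i; rewrite !mxE; ring.
rewrite enorm_le1; apply: unit_ball_spindle; rewrite -?enorm_le1 ?Kx ?Ky //.
by rewrite opprB addrA subrK.
Qed.

Lemma cpolar2_support_shift A x w : dotp w w = 1 -> cpolar A x ->
  (forall y, cpolar A y -> dotp y w <= dotp x w) -> cpolar (cpolar A) (x - w).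
Proof.
move=> ww Kx xmax y Ky; rewrite enorm_le1 leNgt; apply/negP => far.
set D := dotp (y - x) (y - x); set c := dotp (x - y) w.
have c0 : 0 <= c by rewrite /c dotpBl subr_ge0 xmax.
have D0 : 0 <= D by exact: dotpxx_ge0.
have Dc : 2 * c < D.
  have eD : dotp (x - y) (x - y) = D by rewrite /D -opprB dotpNl dotpNr opprK.
  by move: far; rewrite addrAC dotp_sqrB eD ww -/c; lra.
(* [c < m < D / 2], and [l] solves [2 mu + mu^2 = l (1 - l) D] for [mu = l m]. *)
set m := (2 * c + D) / 4.
have m0 : 0 <= m by rewrite /m divr_ge0 //; lra.
have den0 : 0 < m ^+ 2 + D by have := sqr_ge0 m; rewrite /m; lra.
set l := (D - 2 * m) / (m ^+ 2 + D).
have l0 : 0 < l by rewrite divr_gt0 // subr_gt0 /m; lra.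
have l1 : l <= 1 by rewrite ler_pdivrMr // mul1r; have := sqr_ge0 m; lra.
have el : l * (l * (m ^+ 2 + D) - (D - 2 * m)) = 0 by rewrite divfK ?gt_eqF ?subrr ?mulr0.
clearbody l.
have /xmax : cpolar A (x + l *: (y - x) + (l * m) *: w).
  by apply: cpolar_spindle; rewrite -/D ?(ltW l0) ?mulr_ge0 ?(ltW l0) //; lra.
have ec : dotp (y - x) w = - c by rewrite /c -opprB dotpNl.
rewrite dotpDl dotpDl !dotpZl ww ec.
have : c < m by rewrite /m; lra.
nra.
Qed.

Lemma ereal_sup_max (T : Type) (S : set T) (phi : T -> R) t0 : S t0 ->
  (forall t, S t -> phi t <= phi t0) ->
  ereal_sup [set (phi t)%:E | t in S] = (phi t0)%:E.
Proof.
move=> St0 hmax; apply/eqP; rewrite eq_le ereal_sup_ubound ?andbT //=; last by exists t0.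
by apply: ge_ereal_sup => _ [z Sz <-]; rewrite lee_fin hmax.
Qed.

Lemma supp_fun_fin_nonempty (K : set V) v r : supp_fun K v = r%:E -> K !=set0.
Proof.
apply: contraPP => /set0P/negP/negbNE/eqP ->.
by rewrite /supp_fun image_set0 ereal_sup0.
Qed.

Lemma supp_fun_cpolar_fin_nonempty A v r : 0 < enorm v ->
  supp_fun (cpolar A) v = r%:E -> A !=set0.
Proof.
move=> v0 hr; apply: contrapT => /set0P/negP/negbNE/eqP A0.
pose z := ((r + 1) / enorm v ^+ 2) *: v.
have : ((dotp z v)%:E <= supp_fun (cpolar A) v)%E.
  by apply: ereal_sup_ubound; exists z => // a; rewrite A0.
rewrite hr lee_fin dotpZl -sqr_enorm divfK ?expf_neq0 ?gt_eqF //; lra.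
Qed.

Lemma supp_fun_cpolar2 A v : A !=set0 -> cpolar A !=set0 -> 0 < enorm v ->
  supp_fun (cpolar (cpolar A)) v = ((enorm v)%:E - supp_fun (cpolar A) (- v))%E.
Proof.
move=> A0 K0 v0; have [x Kx xmax] := cpolar_argmax (- v) A0 K0.
rewrite {2}/supp_fun (ereal_sup_max Kx xmax) -EFinB dotpNr opprK.
set N := enorm v; set w := N^-1 *: - v.
have ww : dotp w w = 1.
  by rewrite dotpZl dotpZr -sqr_enorm enormN mulrA -expr2 -exprMn mulVf ?gt_eqF ?expr1n.
have Kxw : cpolar (cpolar A) (x - w).
  apply: cpolar2_support_shift ww Kx _ => y Ky.
  by rewrite !dotpZr ler_wpM2l ?invr_ge0 ?enorm_ge0 ?xmax.
have exw : dotp (x - w) v = N + dotp x v.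
  by rewrite dotpBl dotpZl dotpNl -sqr_enorm -/N mulrN expr2 mulKf ?gt_eqF // opprK addrC.
rewrite -exw; apply: ereal_sup_max Kxw _ => z Kz; rewrite exw.
have := Kz x Kx; rewrite enorm_le1 => /(dotp_le_enorm v).
rewrite dotpBl -/N; lra.
Qed.

End Cpolar.

Section DirectionalDerivatives.
Variables (R : realType) (n : nat).
Notation V := 'rV[R]_n.
Implicit Types (F : V -> R) (z e : V).

Lemma is_derive_lineP F z e (d : R) :
  is_derive z e F d <-> is_derive (0 : R) 1 (fun h : R => F (h *: e + z)) d.
Proof.
have De : 'D_e F z = 'D_1 (fun h : R => F (h *: e + z)) 0.
  rewrite /derive; set g1 := fun h => _; set g2 := fun h => _.
  suff -> : g1 = g2 by [].
  by rewrite funeqE /g1 /g2 => h /=; rewrite addr0 scale0r add0r [_%:A]mulr1.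
split=> -[dF <-]; split.
- exact: (proj1 (derivable1P F z e) dF).
- by rewrite De.
- exact: (proj2 (derivable1P F z e) dF).
- by rewrite De.
Qed.

Lemma is_derive_comp1 (psi : R -> R) F z e (dF dpsi : R) :
  is_derive z e F dF -> is_derive (F z) 1 psi dpsi ->
  is_derive z e (psi \o F) (dpsi * dF).
Proof.
move=> /is_derive_lineP DF Dpsi; apply/is_derive_lineP.
have Fz : (fun h : R => F (h *: e + z)) 0 = F z by rewrite /= scale0r add0r.
rewrite -Fz in Dpsi.
exact: (is_derive1_comp Dpsi DF).
Qed.

Lemma is_derive_compN F z e (d : R) :
  is_derive (- z) e F d -> is_derive z e (fun y => F (- y)) (- d).
Proof.
move=> /is_derive_lineP DF; apply/is_derive_lineP; rewrite -mulrN1.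
have -> : (fun h : R => F (- (h *: e + z))) = (fun h : R => F (h *: e - z)) \o -%R.
  by rewrite funeqE => h /=; rewrite opprD scaleNr.
by apply: is_derive1_comp; rewrite oppr0.
Qed.

Lemma is_derive_coord z e (i : 'I_n) : is_derive z e (fun y : V => y 0 i) (e 0 i).
Proof.
apply/is_derive_lineP.
rewrite (_ : (fun h : R => _) = (fun h : R => h * e 0 i + z 0 i)); last first.
  by rewrite funeqE => h; rewrite !mxE.
by apply: is_derive_eq; rewrite scaler0 add0r addr0 [_%:A]mulr1.
Qed.

Lemma is_derive_dotpxx z e : is_derive z e (fun y : V => dotp y y) (2 * dotp z e).
Proof.
apply/is_derive_lineP.
rewrite (_ : (fun h : R => _) =
    (fun h : R => h ^+ 2 * dotp e e + h * (2 * dotp z e) + dotp z z)); last first.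
  rewrite funeqE => h; rewrite !(dotpDl, dotpDr, dotpZl, dotpZr) (dotpC e z).
  by rewrite expr2; ring.
by apply: is_derive_eq; rewrite !(scaler0, scale0r, addr0, add0r) [_%:A]mulr1.
Qed.

Lemma is_derive_enorm z e : 0 < enorm z ->
  is_derive z e (@enorm R n) (dotp z e / enorm z).
Proof.
move=> z0; have zz : 0 < dotp z z by rewrite -sqr_enorm exprn_gt0.
apply: is_derive_eq (is_derive_comp1 (is_derive_dotpxx z e) (is_derive1_sqrt zz)) _.
by rewrite -/(enorm z); field; exact: lt0r_neq0.
Qed.

Lemma is_derive_enormV z e : 0 < enorm z ->
  is_derive z e (fun y : V => (enorm y)^-1) (- dotp z e / enorm z ^+ 3).
Proof.
move=> z0; have Dinv := @is_deriveV R id (enorm z) 1 1 (lt0r_neq0 z0) (is_derive_id _ _).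
apply: is_derive_eq (is_derive_comp1 (is_derive_enorm e z0) Dinv) _.
by rewrite [_%:A]mulr1; field; exact: lt0r_neq0.
Qed.

Lemma cvg_compN (G : V -> R) z : G @ (- z) --> G (- z) ->
  (fun y => G (- y)) @ z --> G (- z).
Proof. by apply: (cvg_comp (fun y : V => - y) G); exact: opp_continuous. Qed.

Lemma cvg_enormV z : 0 < enorm z -> (fun y : V => (enorm y)^-1) @ z --> (enorm z)^-1.
Proof.
by move=> z0; apply: (@cvgV _ _ (nbhs z)); [rewrite gt_eqF | exact: enorm_continuous].
Qed.

End DirectionalDerivatives.

Section PolarRep.
Variables (R : realType) (n : nat).
Notation V := 'rV[R]_n.
Implicit Types (f : V -> R) (v w : V) (i j : 'I_n).

(* [C2_near f w] unfolds to [\forall v \near w, C2_at f v]. *)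
Definition C2_at f v : Prop :=
  [/\ f @ v --> f v,
      (forall i, derivable f v (ebase R i)),
      (forall i, partial i f @ v --> partial i f v),
      (forall i j, derivable (partial i f) v (ebase R j)) &
      (forall i j, partial j (partial i f) @ v --> partial j (partial i f) v)].

(* If [f] represents h_K near [-w], then [polar_rep f] represents h_{K^c} near [w]
   (see [supp_fun_cpolar2]). *)
Definition polar_rep f v : R := enorm v - f (- v).

Definition polar_rep_partial f i v : R := v 0 i / enorm v + partial i f (- v).

Definition polar_rep_partial2 f i j v : R :=
  (i == j)%:R / enorm v - v 0 i * v 0 j / enorm v ^+ 3 - partial j (partial i f) (- v).

Lemma is_derive_polar_rep f v i : 0 < enorm v -> derivable f (- v) (ebase R i) ->
  is_derive v (ebase R i) (polar_rep f) (polar_rep_partial f i v).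
Proof.
move=> v0 /derivableP/is_derive_compN Df.
by have := is_deriveB (is_derive_enorm (ebase R i) v0) Df; rewrite dotp_ebase opprK.
Qed.

Lemma is_derive_polar_rep_partial f v i j : 0 < enorm v ->
  derivable (partial i f) (- v) (ebase R j) ->
  is_derive v (ebase R j) (polar_rep_partial f i) (polar_rep_partial2 f i j v).
Proof.
move=> v0 /derivableP/is_derive_compN Df.
have Dq := is_deriveM (is_derive_coord v (ebase R j) i) (is_derive_enormV (ebase R j) v0).
apply: is_derive_eq (is_deriveD Dq Df) _.
have scaleE (a b : R) : a *: b = a * b by [].
by rewrite dotp_ebase /polar_rep_partial2 mxE eqxx /= eq_sym /partial !scaleE; ring.
Qed.


Lemma polar_rep_cvg f v : f @ (- v) --> f (- v) -> polar_rep f @ v --> polar_rep f v.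
Proof.
move=> cf; apply: (@cvgB _ _ _ (nbhs v)); first exact: enorm_continuous.
exact: cvg_compN.
Qed.

Lemma polar_rep_partial_cvg f i v : 0 < enorm v ->
  partial i f @ (- v) --> partial i f (- v) ->
  polar_rep_partial f i @ v --> polar_rep_partial f i v.
Proof.
move=> v0 cf; apply: (@cvgD _ _ _ (nbhs v)); last exact: cvg_compN.
by apply: (@cvgM _ _ (nbhs v)); [exact: coord_continuous | exact: cvg_enormV].
Qed.

Lemma polar_rep_partial2_cvg f i j v : 0 < enorm v ->
  partial j (partial i f) @ (- v) --> partial j (partial i f) (- v) ->
  polar_rep_partial2 f i j @ v --> polar_rep_partial2 f i j v.
Proof.
move=> v0 cf; apply: (@cvgB _ _ _ (nbhs v)); last exact: cvg_compN.
apply: (@cvgB _ _ _ (nbhs v)).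
  by apply: (@cvgM _ _ (nbhs v)); [exact: cvg_cst | exact: cvg_enormV].
apply: (@cvgM _ _ (nbhs v)).
  by apply: (@cvgM _ _ (nbhs v)); exact: coord_continuous.
apply: (@cvgV _ _ (nbhs v)); first by rewrite expf_neq0 ?gt_eqF.
apply: (@continuous_comp _ _ _ (@enorm R n) (fun t => t ^+ 3)).
  exact: enorm_continuous.
exact: exprn_continuous.
Qed.

Section Regular.
Variables (f : V -> R) (v : V).
Hypothesis reg : \forall y \near v, 0 < enorm y /\ C2_at f (- y).

Lemma partial_polar_rep_near i :
  \forall y \near v, partial i (polar_rep f) y = polar_rep_partial f i y.
Proof.
apply: filterS reg => y [y0 [_ Df _ _ _]].
by have [] := is_derive_polar_rep y0 (Df i).
Qed.

Lemma partial2_polar_rep i j :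
  partial j (partial i (polar_rep f)) v = polar_rep_partial2 f i j v.
Proof.
have [v0 [_ _ _ D2f _]] := nbhs_singleton reg.
rewrite /partial (near_eq_derive _ (partial_polar_rep_near i)).
by have [] := is_derive_polar_rep_partial v0 (D2f i j).
Qed.

End Regular.

Lemma C2_at_polar_rep f v : (\forall y \near v, 0 < enorm y /\ C2_at f (- y)) ->
  C2_at (polar_rep f) v.
Proof.
move=> reg.
have [v0 [cf Df cDf D2f cD2f]] := nbhs_singleton reg.
split.
- exact: polar_rep_cvg.
- by move=> i; have [] := is_derive_polar_rep v0 (Df i).
- move=> i; have eP := partial_polar_rep_near reg i.
  have Pe : \forall y \near v, polar_rep_partial f i y = partial i (polar_rep f) y.
    by apply: filterS eP => y ->.
  rewrite (nbhs_singleton eP); apply: cvg_trans (polar_rep_partial_cvg v0 (cDf i)).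
  exact: near_eq_cvg Pe.
- move=> i j; have Pe : \forall y \near v,
      polar_rep_partial f i y = partial i (polar_rep f) y.
    by apply: filterS (partial_polar_rep_near reg i) => y ->.
  apply: near_eq_derivable Pe _.
  by have [] := is_derive_polar_rep_partial v0 (D2f i j).
- move=> i j; have Qe : \forall y \near v,
      polar_rep_partial2 f i j y = partial j (partial i (polar_rep f)) y.
    by apply: filterS (nbhs_interior reg) => y /partial2_polar_rep ->.
  rewrite -(nbhs_singleton Qe); apply: cvg_trans (polar_rep_partial2_cvg v0 (cD2f i j)).
  exact: near_eq_cvg Qe.
Qed.


Lemma near_opp (a : V) (P : V -> Prop) :
  (\forall y \near a, P y) -> \forall y \near - a, P (- y).
Proof.
move=> Pa; have : (fun y : V => - y) @ (- a) --> a.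
  by rewrite -{2}(opprK a); exact: opp_continuous.
exact.
Qed.

Lemma enorm_gt0_near w : 0 < enorm w -> \forall y \near w, 0 < enorm y.
Proof.
move=> w0; have := @cvgr_gt R V (nbhs w) _ _ _ (@enorm_continuous R n w) 0.
by move=> /(_ _ w0).
Qed.

Section UnitPoint.
Variables (f : V -> R) (w : V).
Hypotheses (w0 : 0 < enorm w) (fC2 : C2_near f (- w)).

Let reg : \forall y \near w, 0 < enorm y /\ C2_at f (- y).
Proof.
have := near_opp fC2; rewrite opprK => fC2'.
by apply: filterS2 (enorm_gt0_near w0) fC2' => y; split.
Qed.

Lemma C2_near_polar_rep : C2_near (polar_rep f) w.
Proof. by apply: filterS (nbhs_interior reg) => y; exact: C2_at_polar_rep. Qed.

Lemma grad_polar_rep : grad (polar_rep f) w = (enorm w)^-1 *: w + grad f (- w).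
Proof.
apply/rowP => i; rewrite !mxE (nbhs_singleton (partial_polar_rep_near reg i)).
by rewrite /polar_rep_partial mulrC.
Qed.

Lemma hess_polar_rep : hess (polar_rep f) w =
  (enorm w)^-1 *: 1%:M - (enorm w ^+ 3)^-1 *: (w^T *m w) - hess f (- w).
Proof.
apply/matrixP => i j; rewrite !mxE partial2_polar_rep // big_ord1 !mxE.
by rewrite /polar_rep_partial2 mulrC [_ * (_ ^+ 3)^-1]mulrC.
Qed.

End UnitPoint.

End PolarRep.

Section SupportRepresentatives.
Variables (R : realType) (n : nat).
Notation V := 'rV[R]_n.

Lemma supp_rep_cpolar2 (A : set V) u f : 0 < enorm u ->
  supp_rep (cpolar A) u f -> supp_rep (cpolar (cpolar A)) (- u) (polar_rep f).
Proof.
move=> u0 hf; have hu := nbhs_singleton hf.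
have A0 := supp_fun_cpolar_fin_nonempty u0 hu; have K0 := supp_fun_fin_nonempty hu.
have u0' : 0 < enorm (- u) by rewrite enormN.
apply: filterS2 (enorm_gt0_near u0') (near_opp hf) => v v0 hv.
by rewrite supp_fun_cpolar2 // hv.
Qed.

Lemma hess_supp_rep (T : set V) w (f1 f2 : V -> R) :
  supp_rep T w f1 -> supp_rep T w f2 -> hess f1 w = hess f2 w.
Proof.
move=> h1 h2; have e12 : \forall y \near w, f1 y = f2 y.
  by apply: filterS2 h1 h2 => y -> [].
apply/matrixP => i j; rewrite !mxE; apply: near_eq_derive.
by apply: filterS (nbhs_interior e12) => y ey; exact: near_eq_derive.
Qed.

End SupportRepresentatives.

Lemma char_poly_conj_orthogonal (R : comNzRingType) k (C Q : 'M[R]_k) :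
  Q^T *m Q = 1%:M -> char_poly (Q^T *m C *m Q) = char_poly C.
Proof.
move=> QQ; have QQX : map_mx (@polyC R) Q^T *m map_mx polyC Q = 1%:M.
  by rewrite -map_mxM QQ map_mx1.
rewrite /char_poly; have -> : char_poly_mx (Q^T *m C *m Q) =
    map_mx polyC Q^T *m char_poly_mx C *m map_mx polyC Q.
  rewrite /char_poly_mx mulmxBr mulmxBl -!map_mxM.
  by rewrite [_ *m 'X%:M]scalar_mxC -(mulmxA 'X%:M) QQX mulmx1.
by rewrite !det_mulmx mulrAC -det_mulmx QQX det1 mul1r.
Qed.

Lemma char_poly_1subr (R : comNzRingType) k (C : 'M[R]_k) (r : 'I_k -> R) :
  char_poly C = \prod_(i < k) ('X - (r i)%:P) ->
  char_poly (1%:M - C) = \prod_(i < k) ('X - (1 - r i)%:P).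
Proof.
move=> E; pose q : {poly R} := 1 - 'X.
have Cq : map_mx (comp_poly q) (char_poly_mx C) = (-1) *: char_poly_mx (1%:M - C).
  apply/matrixP => i j; rewrite !mxE rmorphB /= rmorphMn /= comp_polyX comp_polyC.
  by case: (i == j); rewrite /= ?mulr1n ?mulr0n ?polyCB ?polyC1 ?polyC0 /q; ring.
have qC : comp_poly q (char_poly C) = (-1) ^+ k * char_poly (1%:M - C).
  by rewrite /char_poly -det_map_mx Cq detZ.
have qP : comp_poly q (\prod_(i < k) ('X - (r i)%:P)) =
    (-1) ^+ k * \prod_(i < k) ('X - (1 - r i)%:P).
  have -> : (-1) ^+ k = \prod_(i < k) (-1 : {poly R}) by rewrite prodr_const card_ord.
  rewrite rmorph_prod -big_split /=.
  apply: eq_bigr => i _; rewrite rmorphB /= comp_polyX comp_polyC /q polyCB polyC1.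
  ring.
by move: qC; rewrite E qP => /(congr1 ( *%R ((-1) ^+ k))); rewrite !signrMK.
Qed.

Lemma sorted_map_ord_enum (R : realDomainType) k (s : 'I_k -> R) :
  {homo s : i j / (i <= j)%N >-> i <= j} ->
  sorted <=%O [seq s i | i <- Order.enum 'I_k].
Proof.
move=> hs; rewrite Order.enum_ord.
have : sorted (relpre val leq) (enum 'I_k).
  by rewrite -sorted_map val_enum_ord iota_sorted.
by apply: homo_sorted => i j; exact: hs.
Qed.

Lemma prod_XsubC_compl_rev (R : realFieldType) k (r s : 'I_k -> R) :
  {homo r : i j / (i <= j)%N >-> i <= j} -> {homo s : i j / (i <= j)%N >-> i <= j} ->
  \prod_(i < k) ('X - (s i)%:P) = \prod_(i < k) ('X - (1 - r i)%:P) ->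
  forall i, r i + s (rev_ord i) = 1.
Proof.
move=> hr hs; rewrite [RHS](reindex_inj rev_ord_inj) /=.
have seqE (t : 'I_k -> R) :
    \prod_(i < k) ('X - (t i)%:P) =
    \prod_(x <- [seq t i | i <- Order.enum 'I_k]) ('X - x%:P).
  by rewrite big_map Order.enum_ord big_enum.
rewrite !seqE => /prod_XsubC_eq perm_sr i.
have sr : sorted <=%O [seq 1 - r (rev_ord i) | i <- Order.enum 'I_k].
  apply: sorted_map_ord_enum => i' j' le_ij; rewrite lerD2l lerN2 hr //.
  by rewrite /= leq_sub2l // ltn_add2r.
have := le_sorted_eq (sorted_map_ord_enum hs) sr perm_sr.
move=> /(congr1 (fun t => nth 0 t (rev_ord i))).
rewrite !(nth_map (rev_ord i)) ?Order.size_enum_ord ?ltn_ord //.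
by rewrite !Order.nth_ord_enum rev_ordK => ->; rewrite addrC subrK.
Qed.

Lemma orthonormal_compl_proj (R : comUnitRingType) k (u : 'rV[R]_k.+1)
    (B : 'M[R]_(k.+1, k)) :
  u *m u^T = 1%:M -> B^T *m B = 1%:M -> u *m B = 0 -> B *m B^T = 1%:M - u^T *m u.
Proof.
move=> uu BB uB; set M : 'M[R]_(1 + k, k.+1) := col_mx u B^T.
have MM : M *m M^T = 1%:M.
  by rewrite tr_col_mx mul_col_row trmxK uB -trmx_mul uB trmx0 BB uu -scalar_mx_block.
have := mulmx1C MM; rewrite tr_col_mx mul_row_col trmxK => <-.
by rewrite addrC addKr.
Qed.

Lemma spectra_compl_rev (R : realFieldType) n (u : 'rV[R]_n) (H : 'M[R]_n)
    (B1 B2 : 'M[R]_(n, n.-1)) (r s : 'I_n.-1 -> R) :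
  u *m u^T = 1%:M ->
  B1^T *m B1 = 1%:M -> u *m B1 = 0 ->
  char_poly (B1^T *m H *m B1) = \prod_(i < n.-1) ('X - (r i)%:P) ->
  B2^T *m B2 = 1%:M -> u *m B2 = 0 ->
  char_poly (B2^T *m (1%:M - u^T *m u - H) *m B2) = \prod_(i < n.-1) ('X - (s i)%:P) ->
  {homo r : i j / (i <= j)%N >-> i <= j} -> {homo s : i j / (i <= j)%N >-> i <= j} ->
  forall i, r i + s (rev_ord i) = 1.
Proof.
case: n u H B1 B2 r s => [|k] u H B1 B2 r s uu B1B1 uB1 cr B2B2 uB2 cs hr hs.
  by case.
set Q := B1^T *m B2.
have BQ : B1 *m Q = B2.
  rewrite mulmxA (orthonormal_compl_proj uu B1B1 uB1) mulmxBl mul1mx.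
  by rewrite -mulmxA uB2 mulmx0 subr0.
have QQ : Q^T *m Q = 1%:M by rewrite {1}/Q trmx_mul trmxK -mulmxA BQ B2B2.
have HQ : B2^T *m (1%:M - u^T *m u - H) *m B2 = Q^T *m (1%:M - B1^T *m H *m B1) *m Q.
  have uB2T : B2^T *m u^T = 0 by rewrite -trmx_mul uB2 trmx0.
  transitivity (1%:M - B2^T *m H *m B2).
    by rewrite !mulmxBr !mulmxBl mulmx1 B2B2 !mulmxA uB2T !mul0mx subr0.
  by rewrite !mulmxBr !mulmxBl mulmx1 QQ -BQ trmx_mul !mulmxA.
apply: prod_XsubC_compl_rev hr hs _.
by rewrite -cs HQ char_poly_conj_orthogonal // (char_poly_1subr cr).
Qed.

Unset Implicit Arguments.
Theorem theorem4p27 (R : realType) (n : nat) (K : set 'rV[R]_n) (u : 'rV[R]_n)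
    (f : 'rV[R]_n -> R) :
  (2 <= n)%N -> in_Sn K -> enorm u = 1 ->
  supp_rep K u f -> C2_near f u ->
  (exists g : 'rV[R]_n -> R,
      [/\ supp_rep (cpolar K) (- u) g, C2_near g (- u) &
          grad g (- u) = grad f u - u]) /\
  (forall r s : 'I_n.-1 -> R,
      principal_radii K u r -> principal_radii (cpolar K) (- u) s ->
      forall i : 'I_n.-1, r i + s (rev_ord i) = 1).
Proof.
move=> _ [A ->] hu Sf Cf.
have u0 : 0 < enorm u by rewrite hu.
have nu0 : 0 < enorm (- u) by rewrite enormN.
have Cf' : C2_near f (- - u) by rewrite opprK.
have Sg := supp_rep_cpolar2 u0 Sf.
split.
  exists (polar_rep f); split; [exact: Sg | exact: C2_near_polar_rep |].
  by rewrite grad_polar_rep // opprK enormN hu invr1 scale1r addrC.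
move=> r s [f1 [S1 _ hr [B1 [B1B1 uB1 cr]]]] [f2 [S2 _ hs [B2 [B2B2 uB2 cs]]]].
have uu : u *m u^T = 1%:M by rewrite mulmx_tr_dotp -sqr_enorm hu expr1n.
rewrite (hess_supp_rep S1 Sf) in cr.
rewrite (hess_supp_rep S2 Sg) hess_polar_rep // enormN hu expr1n invr1 !scale1r in cs.
rewrite [(- u)^T]raddfN mulNmx mulmxN !opprK in cs.
apply: spectra_compl_rev uu B1B1 uB1 cr B2B2 _ cs hr hs.
by apply/eqP; rewrite -oppr_eq0 -mulNmx uB2.
Qed.
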